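(* Let $p=\xi_1+i\operatorname{Im}p$ be a smooth function on $T^\ast(\mathbb{R}^n)\smallsetminus0$. Assume that $\operatorname{Im}p$ strongly changes sign from $-$ to $+$ on $\gamma=[a,b]\times\{w\}$ and that $L_p(\gamma)\ge|\gamma|-\varrho$ for some $0<\varrho<|\gamma|/2$. If $\operatorname{Im}p$ does not depend on $\xi_1$, then for every $\kappa>\varrho$ the function $\operatorname{Im}p$ vanishes identically in a neighborhood of $I_\kappa\times\{w\}$, where $I_\kappa=[a+\kappa,b-\kappa]$.
   Context: Write points of $T^\ast(\mathbb{R}^n)$ as $(x_1,x',\xi_1,\xi')$. A bicharacteristic of $\operatorname{Re}p=\xi_1$ is $\gamma=[a,b]\times\{w_0\}=\{(t,x',0,\xi'):a\le t\le b\}$ with $w_0=(x',0,\xi')$; functions are written $g(t,w)$; $|\gamma|=b-a$. For $\gamma_j=[a_j,b_j]\times\{w_j\}$, $\gamma_j\dashrightarrow\gamma$ means $\liminf a_j\ge a$, $\limsup b_j\le b$, $w_j\to w_0$. $\operatorname{Im}p$ strongly changes sign from $-$ to $+$ on $[a,b]\times\{w_0\}$ if $\operatorname{Im}p(t,w_0)=0$ for $a\le t\le b$ and for every $\varepsilon>0$ there exist $a-\varepsilon<s_-<a$, $b<s_+<b+\varepsilon$ with $\operatorname{Im}p(s_-,w_0)<0<\operatorname{Im}p(s_+,w_0)$. When some sequence of such bicharacteristics $\gamma_j$ with this sign change satisfies $\gamma_j\dashrightarrow\gamma$, $L_p(\gamma)=\inf\liminf_j|\gamma_j|$ over all such sequences.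 *)

From HB Require Import structures.
From mathcomp Require Import all_boot all_order all_algebra.
From mathcomp Require Import all_classical all_reals all_analysis.
Set Implicit Arguments. Unset Strict Implicit. Unset Printing Implicit Defensive.
Import Order.TTheory GRing.Theory Num.Theory.
Import numFieldNormedType.Exports.
Local Open Scope classical_set_scope.
Local Open Scope ring_scope.

(* T^*(R^n) with n = m+1.  A point (x_1, x', xi_1, xi') is written (t, w)
   with t = x_1 and w = (x', xi_1, xi') : W m. *)
Definition W (R : realType) (m : nat) : Type :=
  ('rV[R]_m * R * 'rV[R]_m)%type.
Definition Pt (R : realType) (m : nat) : Type := (R * W R m)%type.

Definition w_x' R m (w : W R m) : 'rV[R]_m := w.1.1.
Definition w_xi1 R m (w : W R m) : R := w.1.2.
Definition w_xi' R m (w : W R m) : 'rV[R]_m := w.2.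

Definition cotangent_minus_zero (R : realType) (m : nat) : set (Pt R m) :=
  [set z | (w_xi1 z.2 != 0) \/ (w_xi' z.2 != 0)].

Fixpoint iterD (R : realType) (V : normedModType R) (vs : seq V)
    (f : V -> R) : V -> R :=
  match vs with
  | [::] => f
  | v :: vs' => fun x => 'D_v (iterD vs' f) x
  end.

Definition smooth_on (R : realType) (V : normedModType R) (U : set V)
    (f : V -> R) : Prop :=
  forall (vs : seq V) (x : V), U x ->
    (forall v : V, derivable (iterD vs f) x v) /\
    {for x, continuous (iterD vs f)}.

(* gamma = [a,b] x {w} is a bicharacteristic of Re p = xi_1 in T^*(R^n)\0 *)
Definition is_bichar (R : realType) (m : nat) (a b : R) (w : W R m) : Prop :=
  a <= b /\ w_xi1 w = 0 /\ w_xi' w != 0.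

Definition strongly_changes_sign (R : realType) (m : nat)
    (q : Pt R m -> R) (a b : R) (w : W R m) : Prop :=
  (forall t, a <= t <= b -> q (t, w) = 0) /\
  (forall eps : R, 0 < eps ->
     exists sm sp : R, [/\ a - eps < sm < a, b < sp < b + eps &
                          q (sm, w) < 0 < q (sp, w)]).

Definition bichar_conv (R : realType) (m : nat)
    (A B : nat -> R) (Ws : nat -> W R m) (a b : R) (w : W R m) : Prop :=
  [/\ (a%:E <= limn_einf (fun j => (A j)%:E))%E,
      (limn_esup (fun j => (B j)%:E) <= b%:E)%E &
      Ws @ \oo --> w].

Definition Lp (R : realType) (m : nat) (q : Pt R m -> R)
    (a b : R) (w : W R m) : \bar R :=
  ereal_inf [set l : \bar R | exists (A B : nat -> R) (Ws : nat -> W R m),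
     [/\ forall j, is_bichar (A j) (B j) (Ws j),
         forall j, strongly_changes_sign q (A j) (B j) (Ws j),
         bichar_conv A B Ws a b w &
         l = limn_einf (fun j => (B j - A j)%:E)]].

Definition indep_xi1 (R : realType) (m : nat) (q : Pt R m -> R) : Prop :=
  forall (t : R) (x' xi' : 'rV[R]_m) (s1 s2 : R),
    cotangent_minus_zero ((t, (x', s1, xi')) : Pt R m) ->
    cotangent_minus_zero ((t, (x', s2, xi')) : Pt R m) ->
    q (t, (x', s1, xi')) = q (t, (x', s2, xi')).

(* Suppose Im p did not vanish at some (t, w') with t in [a + k, b - k],
   rho < k < kappa, w' close to w and xi_1(w') = 0.  Since Im p changes sign
   from - to + just outside [a, b] on the line through w, it does so on the
   nearby line through w' too, and an intermediate value argument on the side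
   of t where Im p has the opposite sign yields a bicharacteristic through w'
   on which Im p strongly changes sign, lying strictly before or after t: its
   length is below |gamma| - k + o(1).  Letting w' tend to w gives
   L_p(gamma) <= |gamma| - k < |gamma| - rho, a contradiction.  Independence
   of xi_1 then spreads the vanishing from {xi_1 = 0} to a full
   neighbourhood. *)

From HB Require Import structures.
From mathcomp Require Import all_boot all_order all_algebra.
From mathcomp Require Import all_classical all_reals all_analysis.
From mathcomp Require Import lra.
Import Order.TTheory GRing.Theory Num.Theory.
Import numFieldNormedType.Exports.
Local Open Scope classical_set_scope.
Local Open Scope ring_scope.

Set Implicit Arguments.
Unset Strict Implicit.
Unset Printing Implicit Defensive.

Section sign_change.
Variable R : realType.
Implicit Types (f : R -> R) (u v : R).

Lemma continuous_lt0_ball (M : pseudoMetricType R) (f : M -> R) (x : M) :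
  {for x, continuous f} -> f x < 0 ->
  exists2 d : R, 0 < d & forall y, ball x d y -> f y < 0.
Proof. by move=> cf fx_lt0; apply/nbhs_ballP; exact: cvgr_lt cf _ fx_lt0. Qed.

Lemma continuous_gt0_ball (M : pseudoMetricType R) (f : M -> R) (x : M) :
  {for x, continuous f} -> 0 < f x ->
  exists2 d : R, 0 < d & forall y, ball x d y -> 0 < f y.
Proof. by move=> cf fx_gt0; apply/nbhs_ballP; exact: cvgr_gt cf _ fx_gt0. Qed.

Lemma ballRE (x d y : R) : ball x d y = (x - d < y < x + d).
Proof. by rewrite ball_itv /= in_itv. Qed.

Lemma last_exit_from_negative f u v : u <= v -> {in `[u, v], continuous f} ->
  f u < 0 -> 0 <= f v ->
  exists s, [/\ u < s <= v, f s = 0, {in `[s, v], forall x, 0 <= f x} &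
    forall e, 0 < e -> exists2 x, s - e < x < s & f x < 0].
Proof.
move=> uv cf fu_lt0 fv_ge0.
pose S := [set x | u <= x <= v /\ f x < 0].
have Su : S u by split; rewrite ?lexx ?uv.
have supS : has_sup S by split; [exists u | exists v => x [/andP[_ ?] _]].
pose s := sup S.
have le_s : forall x, S x -> x <= s := sup_upper_bound supS.
have us : u <= s := le_s _ Su.
have sv : s <= v by apply: ge_sup; [exists u | move=> x [/andP[_ ?] _]].
have cfs : {for s, continuous f} by apply: cf; rewrite in_itv /= us sv.
have ge0_right x : s < x <= v -> 0 <= f x.
  move=> /andP[sx xv]; rewrite leNgt; apply/negP => fx_lt0.
  have : x <= s by apply: le_s; split; rewrite ?xv ?andbT //; lra.
  lra.
have fs0 : f s = 0.
  apply/eqP; rewrite eq_le; apply/andP; split; rewrite leNgt; apply/negP.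
  - move=> /(continuous_gt0_ball cfs)[d d_gt0 Hd].
    have [x Sx sx] : exists2 x, S x & s - d < x := sup_adherent d_gt0 supS.
    have : 0 < f x by apply: Hd; rewrite ballRE; have := le_s _ Sx; lra.
    by case: Sx => _; lra.
  - move=> /[dup] fs_lt0 /(continuous_lt0_ball cfs)[d d_gt0 Hd].
    have s_lt_v : s < v.
      by rewrite lt_neqAle sv andbT; apply: contraTneq fs_lt0 => ->; rewrite -leNgt.
    have [x [sx xv xd]] : exists x, [/\ s < x, x <= v & x < s + d].
      have [?|?] := leP (s + d / 2) v; first by exists (s + d / 2); split; lra.
      by exists v; split; lra.
    have : f x < 0 by apply: Hd; rewrite ballRE; lra.
    have : 0 <= f x by apply: ge0_right; lra.
    lra.
have u_lt_s : u < s.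
  by rewrite lt_neqAle us andbT; apply: contraTneq fu_lt0 => ->; rewrite fs0 ltxx.
exists s; split => //; first by rewrite u_lt_s sv.
- move=> x; rewrite in_itv /= => /andP[sx xv].
  have [<-|s_neq_x] := eqVneq s x; first by rewrite fs0.
  by apply: ge0_right; rewrite xv andbT lt_neqAle s_neq_x.
- move=> e e_gt0.
  have [x Sx sx] : exists2 x, S x & s - e < x := sup_adherent e_gt0 supS.
  exists x; last by case: Sx.
  rewrite sx /= lt_neqAle le_s // andbT.
  by apply/eqP => xs; case: Sx => _; rewrite xs fs0 ltxx.
Qed.

Lemma strong_sign_change_between f u v : u <= v -> {in `[u, v], continuous f} ->
  f u < 0 -> 0 < f v ->
  exists s t, [/\ u < s, s <= t, t < v,
    (forall x, s <= x <= t -> f x = 0) &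
    forall e, 0 < e -> exists x y,
      [/\ s - e < x < s, t < y < t + e & f x < 0 < f y]].
Proof.
move=> uv cf fu_lt0 fv_gt0.
have [s [/andP[us sv] fs0 f_ge0 f_neg_left]] :=
  last_exit_from_negative uv cf fu_lt0 (ltW fv_gt0).
(* the first positive point after [s] is, up to sign, the last exit of
   [x |-> - f (- x)] from the negative values on [[-v, -s]] *)
pose g x := - f (- x).
have cg : {in `[- v, - s], continuous g}.
  move=> x; rewrite in_itv /= => /andP[vx xs].
  have cfNx : {for - x, continuous f}.
    by apply: cf; rewrite in_itv /=; apply/andP; split; lra.
  exact/continuousN/(continuous_comp (@oppr_continuous _ R^o x) cfNx).
have [t [/andP[vt ts] gt0 g_ge0 g_neg_left]] :
    exists t, [/\ - v < t <= - s, g t = 0, {in `[t, - s], forall x, 0 <= g x} &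
      forall e, 0 < e -> exists2 x, t - e < x < t & g x < 0].
  apply: (last_exit_from_negative _ cg); rewrite /g ?opprK ?fs0 ?oppr0; lra.
exists s, (- t); split; try lra.
- move=> x /andP[sx xt]; apply/eqP; rewrite eq_le; apply/andP; split.
  + have : 0 <= g (- x).
      by apply: g_ge0; rewrite in_itv /=; apply/andP; split; lra.
    by rewrite /g opprK; lra.
  + by apply: f_ge0; rewrite in_itv /=; apply/andP; split; lra.
- move=> e e_gt0.
  have [x xs fx_lt0] := f_neg_left e e_gt0.
  have [y /andP[ty yt] gy_lt0] := g_neg_left e e_gt0.
  exists x, (- y); split => //; first by apply/andP; split; lra.
  by rewrite fx_lt0 /=; move: gy_lt0; rewrite /g; lra.
Qed.
End sign_change.

Section liminf_limsup.
Variable R : realType.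
Local Open Scope ereal_scope.

Lemma le_limn_einf (u v : (\bar R)^nat) :
  (forall n, u n <= v n) -> limn_einf u <= limn_einf v.
Proof.
move=> uv; rewrite !limn_einf_lim.
apply: lee_lim; [exact: is_cvg_einfs | exact: is_cvg_einfs |].
apply: nearW => n; apply: le_ereal_inf_tmp => _ [k nk <-].
by apply: le_trans (uv k); apply: ereal_inf_lbound; exists k.
Qed.

Lemma le_limn_esup (u v : (\bar R)^nat) :
  (forall n, u n <= v n) -> limn_esup u <= limn_esup v.
Proof.
move=> uv; rewrite !limn_esup_lim.
apply: lee_lim; [exact: is_cvg_esups | exact: is_cvg_esups |].
apply: nearW => n; apply: ge_ereal_sup => _ [k nk <-].
by apply: le_trans (uv k) _; apply: ereal_sup_ubound; exists k.
Qed.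

Lemma limn_einf_ge_lim (u v : R^nat) (c : R) : u @ \oo --> c ->
  (forall n, (u n <= v n)%R) -> c%:E <= limn_einf (fun n => (v n)%:E).
Proof.
move=> uc uv; have ucE : (fun n => (u n)%:E) @ \oo --> c%:E.
  by apply: cvg_EFin; [exact: nearW | exact: uc].
rewrite -(cvg_limn_einf_sup ucE).1.
by apply: le_limn_einf => n; rewrite lee_fin.
Qed.

Lemma limn_esup_le_lim (u v : R^nat) (c : R) : v @ \oo --> c ->
  (forall n, (u n <= v n)%R) -> limn_esup (fun n => (u n)%:E) <= c%:E.
Proof.
move=> vc uv; have vcE : (fun n => (v n)%:E) @ \oo --> c%:E.
  by apply: cvg_EFin; [exact: nearW | exact: vc].
rewrite -(cvg_limn_einf_sup vcE).2.
by apply: le_limn_esup => n; rewrite lee_fin.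
Qed.
End liminf_limsup.

Section slices.
Variables (T U V : topologicalType) (f : T * U -> V).

Lemma continuous_slice1 (x : T) (y : U) :
  {for (x, y), continuous f} -> {for x, continuous (fun x' => f (x', y))}.
Proof.
move=> cf; apply: (continuous_comp _ cf).
by apply: (@cvg_pair _ _ _ _ (nbhs x) (nbhs y)); [exact: cvg_id | exact: cvg_cst].
Qed.

Lemma continuous_slice2 (x : T) (y : U) :
  {for (x, y), continuous f} -> {for y, continuous (fun y' => f (x, y'))}.
Proof.
move=> cf; apply: (continuous_comp _ cf).
by apply: (@cvg_pair _ _ _ _ (nbhs x) (nbhs y)); [exact: cvg_cst | exact: cvg_id].
Qed.

End slices.

Section bicharacteristics.
Variables (R : realType) (m : nat) (q : Pt R m -> R).
Hypothesis q_cont : forall z : Pt R m, w_xi' z.2 != 0 -> {for z, continuous q}.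

Lemma near_xi'_neq0 (w : W R m) :
  w_xi' w != 0 -> \forall w' \near w, w_xi' w' != 0.
Proof.
move=> w2; have xi_gt0 : 0 < `|w_xi' w| by rewrite normr_gt0.
apply/nbhs_ballP; exists `|w_xi' w| => // w' [_ /= ball2].
apply/eqP => xi'0; move: ball2; rewrite -[w'.2]/(w_xi' w') xi'0.
by rewrite -ball_normE /ball_ /= subr0 ltxx.
Qed.

Lemma strongly_changes_sign_near (a b e : R) (w : W R m) :
  w_xi' w != 0 -> strongly_changes_sign q a b w -> 0 < e ->
  \forall w' \near w, exists sm sp : R,
    [/\ a - e < sm < a, b < sp < b + e & q (sm, w') < 0 < q (sp, w')].
Proof.
move=> w2 [_ change] e_gt0.
have [sm [sp [hsm hsp /andP[qsm qsp]]]] := change e e_gt0.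
have cq s : {for w, continuous (fun w' => q (s, w'))}.
  by apply: continuous_slice2; exact: q_cont.
near=> w'; exists sm, sp; split => //; apply/andP; split.
- by near: w'; exact: cvgr_lt (cq sm) _ qsm.
- by near: w'; exact: cvgr_gt (cq sp) _ qsp.
Unshelve. all: by end_near. Qed.

Lemma bichar_between (u v : R) (w : W R m) :
  w_xi1 w = 0 -> w_xi' w != 0 -> u <= v -> q (u, w) < 0 -> 0 < q (v, w) ->
  exists A B, [/\ is_bichar A B w, strongly_changes_sign q A B w, u < A & B < v].
Proof.
move=> w1 w2 uv qu qv.
have cq : {in `[u, v], continuous (fun s => q (s, w))}.
  by move=> s _; apply: continuous_slice1; exact: q_cont.
have [A [B [uA AB Bv zero change]]] := strong_sign_change_between uv cq qu qv.
by exists A, B.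
Qed.

Lemma bichar_beside (sm sp t : R) (w : W R m) :
  w_xi1 w = 0 -> w_xi' w != 0 -> sm < t < sp ->
  q (sm, w) < 0 -> 0 < q (sp, w) -> q (t, w) != 0 ->
  exists A B, [/\ is_bichar A B w, strongly_changes_sign q A B w,
    sm < A, B < sp & t < A \/ B < t].
Proof.
move=> w1 w2 /andP[smt tsp] qsm qsp; rewrite neq_lt => /orP[qt|qt].
- have [A [B [? ? tA Bsp]]] := bichar_between w1 w2 (ltW tsp) qt qsp.
  by exists A, B; split => //; [lra | left].
- have [A [B [? ? smA Bt]]] := bichar_between w1 w2 (ltW smt) qsm qt.
  by exists A, B; split => //; [lra | right].
Qed.

Lemma Lp_le_of_short_bichars (a b L : R) (w : W R m) :
  (forall e : R, 0 < e -> exists (A B : R) (w' : W R m),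
     [/\ is_bichar A B w', strongly_changes_sign q A B w',
         a - e < A /\ B < b + e, B - A <= L + e & ball w e w']) ->
  (Lp q a b w <= L%:E)%E.
Proof.
move=> short.
have /choice[F HF] : forall j, exists x : R * R * W R m,
    [/\ is_bichar x.1.1 x.1.2 x.2, strongly_changes_sign q x.1.1 x.1.2 x.2,
        a - harmonic j < x.1.1 /\ x.1.2 < b + harmonic j,
        x.1.2 - x.1.1 <= L + harmonic j & ball w (harmonic j) x.2].
  move=> j; have [A [B [w' HA]]] := short _ (harmonic_gt0 j).
  by exists (A, B, w').
pose A j := (F j).1.1; pose B j := (F j).1.2; pose Ws j := (F j).2.
have shiftD (c : R) : (fun j => c + harmonic j) @ \oo --> c.
  rewrite -[X in _ --> X]addr0.
  by apply: cvgD; [exact: cvg_cst | exact: cvg_harmonic].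
have shiftB (c : R) : (fun j => c - harmonic j) @ \oo --> c.
  rewrite -[X in _ --> X]subr0.
  by apply: cvgB; [exact: cvg_cst | exact: cvg_harmonic].
apply: (@le_trans _ _ (limn_einf (fun j => (B j - A j)%:E))).
  apply: ereal_inf_lbound; exists A, B, Ws; split => //.
  - by move=> j; case: (HF j).
  - by move=> j; case: (HF j).
  split.
  - by apply: (limn_einf_ge_lim (shiftB a)) => j; case: (HF j) => _ _ [/ltW].
  - by apply: (limn_esup_le_lim (shiftD b)) => j; case: (HF j) => _ _ [_ /ltW].
  - apply/cvg_ballP => eps eps_gt0; near=> j.
    have [_ _ _ _ ballj] := HF j; apply: le_ball ballj; apply/ltW.
    by near: j; exact: cvgr_lt cvg_harmonic _ eps_gt0.
apply: le_trans (limn_einf_sup _) _.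
by apply: (limn_esup_le_lim (shiftD L)) => j; case: (HF j).
Unshelve. all: by end_near. Qed.

Lemma vanishes_near_bichar (a b k : R) (w : W R m) :
  w_xi1 w = 0 -> w_xi' w != 0 -> strongly_changes_sign q a b w -> 0 <= k ->
  ((b - a - k)%:E < Lp q a b w)%E ->
  \forall w' \near w,
    forall t, a + k <= t <= b - k -> w_xi1 w' = 0 -> q (t, w') = 0.
Proof.
move=> w1 w2 change k_ge0 Lp_gt; apply: contrapT => not_near.
suff : (Lp q a b w <= (b - a - k)%:E)%E by rewrite leNgt Lp_gt.
apply: Lp_le_of_short_bichars => e e_gt0.
have [d d_gt0 near_d] := (nbhs_ballP _ _).1 (filterI
  (strongly_changes_sign_near w2 change e_gt0)
  (filterI (near_xi'_neq0 w2) (nbhsx_ballx w e e_gt0))).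
have [w' /near_d[[sm [sp [/andP[sm_gt sm_lt] /andP[sp_gt sp_lt] /andP[qsm qsp]]]]
    [w'2 w'e]]] :
    exists2 w', ball w d w' &
      exists t, ~ (a + k <= t <= b - k -> w_xi1 w' = 0 -> q (t, w') = 0).
  apply: contrapT => none; apply: not_near.
  apply/nbhs_ballP; exists d => // w' bw'.
  by apply: contrapT => nP; apply: none; exists w' => //; exact/existsNP.
move=> [t /not_implyP[/andP[t_ge t_le] /not_implyP[w'1 /eqP qt]]].
have sm_t_sp : sm < t < sp by apply/andP; split; lra.
have [A [B [bich chg smA Bsp side]]] := bichar_beside w'1 w'2 sm_t_sp qsm qsp qt.
by exists A, B, w'; split => //; [lra | case: side; lra].
Qed.

End bicharacteristics.

Unset Implicit Arguments.

Theorem proposition2p16 (R : realType) (m : nat) (q : Pt R m -> R)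
    (a b : R) (w : W R m) (rho : R) :
  smooth_on (@cotangent_minus_zero R m) q ->
  is_bichar a b w ->
  strongly_changes_sign q a b w ->
  0 < rho -> rho < (b - a) / 2 ->
  ((b - a - rho)%:E <= Lp q a b w)%E ->
  indep_xi1 q ->
  forall kappa : R, rho < kappa ->
    exists U : set (Pt R m),
      [/\ open U,
          (forall t : R, a + kappa <= t <= b - kappa -> U (t, w)) &
          (forall z, U z -> q z = 0)].
Proof.
move=> q_smooth [_ [w1 w2]] change rho_gt0 _ Lp_ge indep kappa rho_kappa.
have q_cont (z : Pt R m) : w_xi' z.2 != 0 -> {for z, continuous q}.
  by move=> z2; exact: (q_smooth [::] z (or_intror z2)).2.
pose k := (rho + kappa) / 2.
have k_ge0 : 0 <= k by rewrite /k; lra.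
have Lp_gt : ((b - a - k)%:E < Lp q a b w)%E.
  by apply: lt_le_trans Lp_ge; rewrite lte_fin /k; lra.
have [d d_gt0 near_d] := (nbhs_ballP _ _).1 (filterI
  (vanishes_near_bichar q_cont w1 w2 change k_ge0 Lp_gt) (near_xi'_neq0 w2)).
exists (fst @^-1` ball ((a + b) / 2) ((b - a) / 2 - k) `&` snd @^-1` ball w d).
split.
- apply: openI; apply: open_comp; try exact: ball_open.
  + by move=> z _; exact: cvg_fst.
  + by move=> z _; exact: cvg_snd.
- by move=> t t_in; split => /=; [rewrite ballRE /k; lra | exact: ballxx].
- move=> [t [[x' s] xi']] [/= /[!ballRE] t_in [[bx' _] bxi']].
  have w0 : ball w d (x', 0, xi').
    by split; [split; rewrite //= -w1; exact: ballxx|].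
  have [vanish xi'_neq0] := near_d _ w0.
  rewrite (indep t x' xi' s 0); [|by right|by right].
  by apply: vanish => //; apply/andP; split; lra.
Qed.
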